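(* Let $G=(V,E)$ be a finite $d$-regular graph ($d\ge 1$) with adjacency matrix $A$, and let $\phi:V\to\mathbb{R}$ satisfy $$(d\cdot \mathrm{Id} + A)\phi = \varepsilon\phi$$ for some real $\varepsilon \neq d$. Let $m\in V$ be a vertex with $|\phi(m)|=\max_{v\in V}|\phi(v)|$. Then for every integer $k\ge 0$, $$\|\phi\|_{\ell^\infty} \le \left(\frac{d}{d-\varepsilon}\right)^{2k}\left(\sum_{j\in V}\big[(AD^{-1})^{2k}\delta_m\big](j)^2\right)^{1/2}\|\phi\|_{\ell^2}.$$
   Context: $D$ is the diagonal degree matrix (here $D=d\cdot\mathrm{Id}$), so $AD^{-1}$ is the transition matrix of the simple random walk: if $\psi$ is a probability distribution on $V$, then $AD^{-1}\psi$ is the distribution after one step to a uniformly random neighbor. $\delta_m:V\to\mathbb{R}$ is the indicator function of the vertex $m$. $\|f\|_{\ell^2}=(\sum_{v}f(v)^2)^{1/2}$ and $\|f\|_{\ell^\infty}=\max_v|f(v)|$. *)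

(* Vertices of the finite graph are 'I_n; functions V -> R are column vectors 'cV[R]_n. *)
From HB Require Import structures.
From mathcomp Require Import all_boot all_order all_algebra.
Set Implicit Arguments. Unset Strict Implicit. Unset Printing Implicit Defensive.
Import Order.TTheory GRing.Theory Num.Theory.
Local Open Scope ring_scope.

Definition adjmx (R : rcfType) (n : nat) (e : rel 'I_n) : 'M[R]_n :=
  \matrix_(i, j) (e i j)%:R.

Definition simple_graph (n : nat) (e : rel 'I_n) : Prop :=
  symmetric e /\ irreflexive e.

Definition regular (n : nat) (e : rel 'I_n) (d : nat) : Prop :=
  forall v : 'I_n, #|[set w | e v w]| = d.

Definition delta (R : rcfType) (n : nat) (m : 'I_n) : 'cV[R]_n :=
  \col_i (i == m)%:R.

Definition linf (R : rcfType) (n : nat) (f : 'cV[R]_n) : R :=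
  \big[Num.max/0]_(i < n) `|f i 0|.

Definition l2 (R : rcfType) (n : nat) (f : 'cV[R]_n) : R :=
  Num.sqrt (\sum_(i < n) f i 0 ^+ 2).

From HB Require Import structures.
From mathcomp Require Import all_boot all_order all_algebra.
From mathcomp Require Import ring.
Set Implicit Arguments. Unset Strict Implicit. Unset Printing Implicit Defensive.
Import Order.TTheory GRing.Theory Num.Theory.
Local Open Scope ring_scope.

(* Write P = d^-1 A for the random-walk matrix.  The eigen-equation
   (d Id + A) phi = eps phi says A phi = (eps - d) phi, hence P phi = c phi with
   c = (eps - d)/d, and P^(2k) phi = c^(2k) phi.  Since c^(2k) = (d/(d-eps))^(-2k),
   evaluating at the vertex m gives
       phi(m) = (d/(d-eps))^(2k) * sum_j P^(2k)(m,j) phi(j).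
   The graph is undirected, so A and all powers of P are symmetric; thus the row
   j |-> P^(2k)(m,j) is the column P^(2k) delta_m.  Cauchy-Schwarz then bounds
   |phi(m)| = ||phi||_oo by the l2 norms of that column and of phi. *)

(* Cauchy-Schwarz for finite sums, squared form: it follows from the Lagrange
   identity sum_(i,j) (a_i b_j - a_j b_i)^2 = 2 (|a|^2 |b|^2 - <a,b>^2). *)
Lemma cauchy_schwarz_sqr (R : realFieldType) (n : nat) (a b : 'I_n -> R) :
  (\sum_i a i * b i) ^+ 2 <= (\sum_i a i ^+ 2) * (\sum_i b i ^+ 2).
Proof.
have lagrange : \sum_i \sum_j (a i * b j - a j * b i) ^+ 2 =
   2 * ((\sum_i a i ^+ 2) * (\sum_i b i ^+ 2)) - 2 * (\sum_i a i * b i) ^+ 2.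
  have expand i j : (a i * b j - a j * b i) ^+ 2 =
     a i ^+ 2 * b j ^+ 2 + b i ^+ 2 * a j ^+ 2 - 2 * ((a i * b i) * (a j * b j)).
    by ring.
  under eq_bigr do under eq_bigr do rewrite expand.
  under eq_bigr do rewrite sumrB big_split /=.
  rewrite sumrB big_split /=.
  under [X in _ - X]eq_bigr do rewrite -mulr_sumr.
  rewrite -mulr_sumr -!big_distrlr /= expr2.
  by rewrite [X in X + _ - _]mulrC; ring.
have : 0 <= 2 * ((\sum_i a i ^+ 2) * (\sum_i b i ^+ 2) - (\sum_i a i * b i) ^+ 2).
  rewrite mulrBr -lagrange.
  by apply: sumr_ge0 => i _; apply: sumr_ge0 => j _; exact: sqr_ge0.
by rewrite pmulr_rge0 // subr_ge0.
Qed.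

Lemma cauchy_schwarz (R : rcfType) (n : nat) (a b : 'I_n -> R) :
  `|\sum_i a i * b i| <= Num.sqrt (\sum_i a i ^+ 2) * Num.sqrt (\sum_i b i ^+ 2).
Proof.
rewrite -sqrtr_sqr -sqrtrM; last by apply: sumr_ge0 => i _; exact: sqr_ge0.
exact/ler_wsqrtr/cauchy_schwarz_sqr.
Qed.

Lemma eigen_exp (R : comPzRingType) (n : nat) (M : 'M[R]_n) (v : 'cV[R]_n) (c : R) :
  M *m v = c *: v -> forall j, M ^+ j *m v = c ^+ j *: v.
Proof.
move=> Mv; elim=> [|j IH]; first by rewrite expr0 mul1mx scale1r.
by rewrite exprS -mulmxE -mulmxA IH -scalemxAr Mv scalerA -exprSr.
Qed.

Lemma trmx_exp_sym (R : comPzRingType) (n : nat) (M : 'M[R]_n) :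
  M^T = M -> forall j, (M ^+ j)^T = M ^+ j.
Proof.
move=> MT; elim=> [|j IH]; first by rewrite expr0 -idmxE trmx1.
by rewrite exprSr -mulmxE trmx_mul IH MT mulmxE -exprS exprSr.
Qed.

Lemma sym_mulmx_delta (R : rcfType) (n : nat) (M : 'M[R]_n) (m j : 'I_n) :
  M^T = M -> (M *m delta R m) j 0 = M m j.
Proof.
move=> MT; rewrite mxE (bigD1 m) //= big1 ?addr0.
  by rewrite !mxE eqxx mulr1 -[in RHS]MT mxE.
by move=> i /negbTE im; rewrite mxE im mulr0.
Qed.

Lemma adjmx_sym (R : rcfType) (n : nat) (e : rel 'I_n) :
  symmetric e -> (adjmx R e)^T = adjmx R e.
Proof. by move=> esym; apply/matrixP => i j; rewrite !mxE esym. Qed.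

Lemma walk_eigen (R : rcfType) (n : nat) (A : 'M[R]_n) (phi : 'cV[R]_n) (dR eps : R) :
  (dR%:M + A) *m phi = eps *: phi ->
  (dR^-1 *: A) *m phi = ((eps - dR) / dR) *: phi.
Proof.
rewrite mulmxDl mul_scalar_mx => Heig.
have Aphi : A *m phi = (eps - dR) *: phi by rewrite scalerBl -Heig addrAC subrr add0r.
by rewrite -scalemxAl Aphi scalerA mulrC.
Qed.

Theorem theorem2 (R : rcfType) (n : nat) (e : rel 'I_n) (d : nat)
  (Hsimple : simple_graph e) (Hreg : regular e d) (Hd : (1 <= d)%N)
  (phi : 'cV[R]_n) (eps : R)
  (Heig : ((d%:R)%:M + adjmx R e) *m phi = eps *: phi)
  (Hne : eps != d%:R)
  (m : 'I_n) (Hm : `|phi m 0| = linf phi)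
  (k : nat) :
  linf phi <=
    (d%:R / (d%:R - eps)) ^+ (2 * k)
    * l2 (((d%:R)^-1 *: adjmx R e) ^+ (2 * k) *m delta R m)
    * l2 phi.
Proof.
set P := (d%:R)^-1 *: adjmx R e; set Q := P ^+ (2 * k).
set mu := (d%:R / (d%:R - eps)) ^+ (2 * k).
have d_neq0 : (d%:R : R) != 0 by rewrite pnatr_eq0 -lt0n.
have de_neq0 : (d%:R - eps : R) != 0 by rewrite subr_eq0 eq_sym.
have mu_ge0 : 0 <= mu by rewrite /mu mulnC exprM; exact: sqr_ge0.
have QT : Q^T = Q.
  by apply: trmx_exp_sym; rewrite linearZ /= adjmx_sym //; case: Hsimple.
(* mu P^(2k) fixes phi, since mu * ((eps - d)/d)^(2k) = (-1)^(2k) = 1 *)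
have Qphi : mu *: (Q *m phi) = phi.
  rewrite /Q (eigen_exp (walk_eigen Heig)) scalerA /mu -exprMn exprM.
  have -> : d%:R / (d%:R - eps) * ((eps - d%:R) / d%:R) = -1 :> R.
    by field; rewrite d_neq0 de_neq0.
  by rewrite sqrrN expr1n expr1n scale1r.

have phi_m : phi m 0 = mu * \sum_j Q m j * phi j 0.
  by rewrite -{1}Qphi !mxE.
rewrite -Hm phi_m normrM ger0_norm // -mulrA ler_wpM2l //.
rewrite /l2; under [X in _ <= Num.sqrt X * _]eq_bigr do rewrite sym_mulmx_delta //.
exact: cauchy_schwarz.
Qed.
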